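(* Let $G$ be a cubic graph and let $J_1,J_2,J_3$ be three joins of $G$. For $i\in\{0,1,2,3\}$ let $E_i$ be the set of edges of $G$ contained in precisely $i$ of the sets $J_1,J_2,J_3$. Then $$|E_0|+\sum_{i=1}^3 n(J_i)=|E_2|+2|E_3|.$$
   Context: A join of a graph $H$ is a set $J\subseteq E(H)$ such that every vertex has degree of the same parity in $H$ and in the spanning subgraph $(V(H),J)$. In a cubic graph every vertex thus has degree $1$ or $3$ in a join $J$; a vertex of degree $3$ in $J$ is called a $J$-vertex, and $n(J)$ denotes the number of $J$-vertices. *)

(* Graphs are finite multigraphs (parallel edges and loops
   allowed): a finite vertex type V, a finite edge type E, and an endpoint map
   ends : E -> V * V.  A loop counts twice towards the degree. *)
From mathcomp Require Import all_boot.
Set Implicit Arguments. Unset Strict Implicit. Unset Printing Implicit Defensive.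

Section Graphs.
Variables (V E : finType) (ends : E -> V * V).

Definition deg (S : {set E}) (v : V) : nat :=
  \sum_(e in S) (((ends e).1 == v) + ((ends e).2 == v)).

Definition cubic : Prop := forall v : V, deg [set: E] v = 3.

Definition is_join (J : {set E}) : Prop :=
  forall v : V, odd (deg J v) = odd (deg [set: E] v).

Definition nJ (J : {set E}) : nat := #|[set v : V | deg J v == 3]|.

Definition Ei (J1 J2 J3 : {set E}) (i : nat) : {set E} :=
  [set e : E | ((e \in J1) + (e \in J2) + (e \in J3) == i)%N].
End Graphs.

(* In a cubic graph every vertex has degree 1 or 3 in a join J,
   so the handshake lemma gives 2|J| = |V| + 2 n(J), and likewise 2|E| = 3|V|.
   Summing over J1, J2, J3 and counting each edge with its multiplicity,
   2(|E_1| + 2|E_2| + 3|E_3|) = 2(|E_0| + |E_1| + |E_2| + |E_3|) + 2 (n(J1) + n(J2) + n(J3)). *)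
From mathcomp Require Import all_boot zify.

Set Implicit Arguments.
Unset Strict Implicit.
Unset Printing Implicit Defensive.

Lemma card_indicator_sum (T : finType) (A : {pred T}) :
  #|A| = \sum_(x : T) (x \in A : nat).
Proof. by rewrite -sum1_card big_mkcond; apply: eq_bigr => x _; case: (x \in A). Qed.

Section Degrees.
Variables (V E : finType) (ends : E -> V * V).

Lemma sum_deg (S : {set E}) : \sum_(v : V) deg ends S v = 2 * #|S|.
Proof.
have sum_eq1 (a : V) : \sum_(v : V) (a == v : nat) = 1.
  by rewrite (bigD1 a) //= eqxx big1 // => v; rewrite eq_sym => /negPf ->.
rewrite /deg exchange_big /= -sum1_card big_distrr /=.
by apply: eq_bigr => e _; rewrite big_split /= !sum_eq1.
Qed.

Lemma deg_subset (S T : {set E}) (v : V) :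
  S \subset T -> deg ends S v <= deg ends T v.
Proof. by move=> ST; rewrite /deg [X in _ <= X](big_setID S) /= (setIidPr ST) leq_addr. Qed.

Hypothesis cubicG : cubic ends.

Lemma card_edges_cubic : 2 * #|E| = 3 * #|V|.
Proof.
rewrite -cardsT -sum_deg (eq_bigr (fun=> 3)) => [|v _]; last exact: cubicG.
by rewrite sum_nat_const mulnC.
Qed.

Lemma deg_join_cubic (J : {set E}) (v : V) :
  is_join ends J -> deg ends J v = 1 \/ deg ends J v = 3.
Proof.
move/(_ v); rewrite cubicG.
have := deg_subset v (subsetT J); rewrite cubicG.
by case: (deg ends J v) => [|[|[|[|n]]]] //; [left | right].
Qed.

Lemma card_join_cubic (J : {set E}) :
  is_join ends J -> 2 * #|J| = #|V| + 2 * nJ ends J.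
Proof.
move=> joinJ; rewrite -sum_deg /nJ card_indicator_sum -sum1_card big_distrr.
rewrite -big_split /=; apply: eq_bigr => v _; rewrite inE.
by case: (deg_join_cubic v joinJ) => ->.
Qed.

End Degrees.

Section EdgeMultiplicities.
Variables (E : finType) (J1 J2 J3 : {set E}).

Lemma card_Ei_partition :
  #|E| = #|Ei J1 J2 J3 0| + #|Ei J1 J2 J3 1| + #|Ei J1 J2 J3 2| + #|Ei J1 J2 J3 3|.
Proof.
rewrite -cardsT !card_indicator_sum -!big_split /=; apply: eq_bigr => e _.
by rewrite !inE; case: (e \in J1); case: (e \in J2); case: (e \in J3).
Qed.

Lemma card_Ei_weighted :
  #|J1| + #|J2| + #|J3| =
  #|Ei J1 J2 J3 1| + 2 * #|Ei J1 J2 J3 2| + 3 * #|Ei J1 J2 J3 3|.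
Proof.
rewrite !card_indicator_sum !big_distrr -!big_split /=; apply: eq_bigr => e _.
by rewrite !inE; case: (e \in J1); case: (e \in J2); case: (e \in J3).
Qed.

End EdgeMultiplicities.

Theorem proposition2p1 (V E : finType) (ends : E -> V * V)
    (J1 J2 J3 : {set E}) :
  cubic ends -> is_join ends J1 -> is_join ends J2 -> is_join ends J3 ->
  (#|Ei J1 J2 J3 0| + (nJ ends J1 + nJ ends J2 + nJ ends J3) =
   #|Ei J1 J2 J3 2| + 2 * #|Ei J1 J2 J3 3|)%N.
Proof.
move=> cubicG join1 join2 join3.
have := card_join_cubic cubicG join1; have := card_join_cubic cubicG join2.
have := card_join_cubic cubicG join3; have := card_edges_cubic cubicG.
have := card_Ei_partition J1 J2 J3; have := card_Ei_weighted J1 J2 J3.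
lia.
Qed.
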